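(* Let $\Phi:\mathcal{S}(\mathbb{C}^2)\to\mathcal{S}(\mathbb{C}^2)$ be a map. The following are equivalent: (1) $D_z(\Phi(\rho),\Phi(\omega))=D_z(\rho,\omega)$ for all $\rho,\omega\in\mathcal{S}(\mathbb{C}^2)$; (2) $|\mathbf{b}_{\Phi(\rho)}|=|\mathbf{b}_\rho|$ for all $\rho\in\mathcal{S}(\mathbb{C}^2)$, and either $(\mathbf{b}_{\Phi(\rho)})_3=(\mathbf{b}_\rho)_3$ for all $\rho\in\mathcal{S}(\mathbb{C}^2)$, or $(\mathbf{b}_{\Phi(\rho)})_3=-(\mathbf{b}_\rho)_3$ for all $\rho\in\mathcal{S}(\mathbb{C}^2)$.
   Context: Let $\mathcal{H}=\mathbb{C}^2$, $\mathcal{H}^*$ its dual space, and $\mathcal{S}(\mathcal{H})$ the set of density operators (positive semidefinite, trace one) on $\mathcal{H}$. For a linear operator $A$ on $\mathcal{H}$, its transpose $A^T$ is the operator on $\mathcal{H}^*$ defined by $(A^T\varphi)(x)=\varphi(Ax)$. For $\rho,\omega\in\mathcal{S}(\mathcal{H})$, the set of quantum couplings is $\mathcal{C}(\rho,\omega)=\{\Pi\in\mathcal{S}(\mathcal{H}\otimes\mathcal{H}^* ):\ \mathrm{tr}_{\mathcal{H}^*}[\Pi]=\omega,\ \mathrm{tr}_{\mathcal{H}}[\Pi]=\rho^T\}$. The Pauli matrices are $\sigma_1=\begin{bmatrix}0&1\\1&0\end{bmatrix}$, $\sigma_2=\begin{bmatrix}0&-i\\i&0\end{bmatrix}$, $\sigma_3=\sigma_z=\begin{bmatrix}1&0\\0&-1\end{bmatrix}$.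 The cost operator is $C_z=(\sigma_z\otimes I^T-I\otimes\sigma_z^T)^2$ and the quantum Wasserstein distance $D_z$ is defined by $D_z^2(\rho,\omega)=\inf\{\mathrm{tr}_{\mathcal{H}\otimes\mathcal{H}^*}[\Pi C_z]:\Pi\in\mathcal{C}(\rho,\omega)\}$. The Bloch vector of $\rho$ is $\mathbf{b}_\rho=(\mathrm{tr}[\sigma_j\rho])_{j=1}^3\in\mathbb{R}^3$, $|\cdot|$ the Euclidean norm, and $(\mathbf{b}_\rho)_3$ its third coordinate. *)

From HB Require Import structures.
From mathcomp Require Import all_boot all_order all_algebra.
From mathcomp Require Import classical_sets reals.
From mathcomp Require Import complex mxtens.

Set Implicit Arguments.
Unset Strict Implicit.
Unset Printing Implicit Defensive.

Import Order.TTheory GRing.Theory Num.Theory.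
Local Open Scope ring_scope.
Local Open Scope classical_set_scope.

Section QOT.
Variable R : realType.
Local Notation C := R[i].

Definition adjmx {m n} (A : 'M[C]_(m, n)) : 'M[C]_(n, m) :=
  (map_mx (fun z : C => z^*%C) A)^T.

(* density operators on C^n: self-adjoint, positive semidefinite, trace one.
   The order on C is the partial order of the numClosedField C
   (0 <= z  iff  z is a nonnegative real). *)
Definition density {n} (A : 'M[C]_n) : Prop :=
  [/\ adjmx A = A,
      (forall v : 'cV[C]_n, 0 <= (adjmx v *m A *m v) 0 0)
    & \tr A = 1].

Definition mx2 (a b c d : C) : 'M[C]_2 :=
  \matrix_(i < 2, j < 2)
    nth 0 (nth [::] [:: [:: a; b]; [:: c; d]] i) j.

Definition sigma1 : 'M[C]_2 := mx2 0 1 1 0.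
Definition sigma2 : 'M[C]_2 := mx2 0 (- Complex 0 1) (Complex 0 1) 0.
Definition sigma3 : 'M[C]_2 := mx2 1 0 0 (-1).

(* H (x) H^* is identified with C^2 (x) C^2 = C^4 using the standard basis of
   C^2 and its dual basis on H^*; in this identification the operator A^T on
   H^* has the matrix A^T (transpose). *)

Definition ptr_dual (P : 'M[C]_(2 * 2)) : 'M[C]_2 :=
  \matrix_(i, j) \sum_(k < 2) P (mxtens_index (i, k)) (mxtens_index (j, k)).

Definition ptr_H (P : 'M[C]_(2 * 2)) : 'M[C]_2 :=
  \matrix_(k, l) \sum_(i < 2) P (mxtens_index (i, k)) (mxtens_index (i, l)).

Definition coupling (rho omega : 'M[C]_2) : set 'M[C]_(2 * 2) :=
  [set P | density P /\ ptr_dual P = omega /\ ptr_H P = rho^T].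

Definition Cz : 'M[C]_(2 * 2) :=
  let S := sigma3 *t (1%:M : 'M[C]_2)^T - (1%:M : 'M[C]_2) *t sigma3^T in S *m S.

Definition Dz2 (rho omega : 'M[C]_2) : R :=
  inf [set complex.Re (\tr (P *m Cz)) | P in coupling rho omega].

Definition Dz (rho omega : 'M[C]_2) : R := Num.sqrt (Dz2 rho omega).

(* Bloch vector b_rho = (tr[sigma_j rho])_{j=1..3}, coordinates indexed by 'I_3 *)
Definition pauli (j : 'I_3) : 'M[C]_2 :=
  match val j with 0 => sigma1 | 1 => sigma2 | _ => sigma3 end.

Definition bloch (rho : 'M[C]_2) (j : 'I_3) : R :=
  complex.Re (\tr (pauli j *m rho)).

Definition bloch_norm (rho : 'M[C]_2) : R :=
  Num.sqrt (\sum_(j < 3) bloch rho j ^+ 2).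

Definition third : 'I_3 := @Ordinal 3 2 isT.

End QOT.

From HB Require Import structures.
From mathcomp Require Import all_boot all_order all_algebra.
From mathcomp Require Import classical_sets boolp reals.
From mathcomp Require Import complex mxtens fingroup perm.
From mathcomp Require Import ring lra.
Import Order.TTheory GRing.Theory Num.Theory.
Local Open Scope ring_scope.
Set Implicit Arguments.
Unset Strict Implicit.
Unset Printing Implicit Defensive.

(* A qubit state is [[p, m], [m^*, q]] with p + q = 1 and |m|^2 <= p q, so that
   |b| = sqrt ((p - q)^2 + 4 |m|^2) and b_3 = p - q.  The cost operator C_z is diagonal with
   entries 0, 4, 4, 0, so a coupling is charged only on its two discordant diagonal entries.
   Conjugating couplings by diagonal unitaries shows that D_z sees a state only through
   (p, q, |m|), and conjugating by the basis swap shows that D_z is invariant under the swap.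
   Explicit couplings together with matching lower bounds give
     D_z^2(rho, |0><0|) = 4 q   and   D_z^2(rho, rho) = 8 |m|^2 / (1 + sqrt (4 p q - 4 |m|^2)),
   the latter strictly increasing in |m|^2.  An isometry must send |0><0| to a state at distance
   0 from itself and 2 from another such state, i.e. to |0><0| or |1><1|; after composing with the
   swap, the two formulas recover q and then |m|, i.e. b_3 and |b|.  Conversely b_3 and |b| fix
   (p, q, |m|) up to the swap, which determines D_z. *)

Local Notation i0 := (ord0 : 'I_2).
Local Notation i1 := (ord_max : 'I_2).
Local Notation ix i k := (@mxtens_index 2 2 (i, k)).
Local Notation i00 := (ix i0 i0).
Local Notation i01 := (ix i0 i1).
Local Notation i10 := (ix i1 i0).
Local Notation i11 := (ix i1 i1).

Section QubitTransport.
Variable R : realType.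
Local Notation C := R[i].
Local Notation Re := complex.Re.
Local Notation Im := complex.Im.

(** * Positive semidefinite matrices *)

Definition sqnormc (z : C) : R := Re z ^+ 2 + Im z ^+ 2.

Lemma sqnormc_ge0 z : 0 <= sqnormc z.
Proof. by rewrite addr_ge0 // sqr_ge0. Qed.

Lemma sqnormc_eq0 z : sqnormc z = 0 -> z = 0.
Proof.
rewrite /sqnormc; case: z => a b /= h.
have a0 : a = 0 by nra.
have b0 : b = 0 by nra.
by rewrite a0 b0.
Qed.

Lemma sqnormc_conj z : sqnormc (conjc z) = sqnormc z.
Proof. by case: z => a b; rewrite /sqnormc /= sqrrN. Qed.

Lemma mulcJ_sqnormc z : z * conjc z = Complex (sqnormc z) 0.
Proof.
case: z => a b; rewrite /sqnormc; apply/eqP; rewrite eq_complex /=.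
by apply/andP; split; apply/eqP; ring.
Qed.

Lemma sqnormc_eq_phase m m' : sqnormc m' = sqnormc m ->
  exists u : C, u * conjc u = 1 /\ m' = u * m.
Proof.
have [-> hm'|m0 hm] := eqVneq m 0.
  exists 1; rewrite rmorph1 mulr1 mulr0; split => //.
  by apply: sqnormc_eq0; rewrite hm' /sqnormc /= expr0n /= addr0.
exists (m' / m); split; last by rewrite divfK.
rewrite rmorphM /= fmorphV /= mulrACA -invfM !mulcJ_sqnormc hm divff //.
by rewrite -mulcJ_sqnormc mulf_neq0 ?conjc_eq0.
Qed.

Definition qform n (A : 'M[C]_n) (v : 'cV[C]_n) : C := (adjmx v *m A *m v) 0 0.

Definition psdmx n (A : 'M[C]_n) : Prop := forall v, 0 <= qform A v.

Lemma qformE n (A : 'M[C]_n) v :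
  qform A v = \sum_i \sum_j conjc (v i 0) * A i j * v j 0.
Proof.
rewrite /qform mxE; under eq_bigr do rewrite mxE mulr_suml.
rewrite exchange_big; apply: eq_bigr => i _; apply: eq_bigr => j _.
by rewrite !mxE.
Qed.

Lemma adjmx_mul m n k (A : 'M[C]_(m, n)) (B : 'M[C]_(n, k)) :
  adjmx (A *m B) = adjmx B *m adjmx A.
Proof. by rewrite /adjmx map_mxM trmx_mul. Qed.

Lemma adjmxK m n (A : 'M[C]_(m, n)) : adjmx (adjmx A) = A.
Proof. by apply/matrixP => i j; rewrite !mxE conjcK. Qed.

Lemma hermmxE n (A : 'M[C]_n) i j : adjmx A = A -> A j i = conjc (A i j).
Proof. by move=> hA; rewrite -{1}hA !mxE. Qed.

Lemma sum_indicator_mull n (i : 'I_n) (F : 'I_n -> C) :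
  \sum_k (k == i)%:R * F k = F i.
Proof.
rewrite (bigD1 i) //= eqxx mul1r big1 ?addr0 // => k /negbTE ->.
by rewrite mul0r.
Qed.

Lemma sum_indicator_mulr n (i : 'I_n) (F : 'I_n -> C) :
  \sum_k F k * (k == i)%:R = F i.
Proof. by under eq_bigr do rewrite mulrC; apply: sum_indicator_mull. Qed.

Definition col2 n (i j : 'I_n) (a b : C) : 'cV[C]_n :=
  \col_k (a * (k == i)%:R + b * (k == j)%:R).

Lemma qform_col2 n (A : 'M[C]_n) i j a b :
  qform A (col2 i j a b) = conjc a * a * A i i + conjc a * b * A i j
                           + conjc b * a * A j i + conjc b * b * A j j.
Proof.
rewrite qformE.
have inner k X : \sum_l X * A k l * col2 i j a b l 0 = X * A k i * a + X * A k j * b.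
  under eq_bigr => l _ do rewrite mxE mulrDr !mulrA.
  by rewrite big_split /= !sum_indicator_mulr.
under eq_bigr => k _ do rewrite inner mxE rmorphD /= !rmorphM /= !conjc_nat.
under eq_bigr => k _ do rewrite !mulrDl -!(mulrC (_ %:R)) -!mulrA.
rewrite !big_split /= !sum_indicator_mull; ring.
Qed.

Lemma ge0cP (z : C) : 0 <= z -> Im z = 0 /\ 0 <= Re z.
Proof. by case: z => x y; rewrite lecE /= => /andP[/eqP -> ->]. Qed.

Lemma psdmx_diag n (A : 'M[C]_n) i : psdmx A -> 0 <= A i i.
Proof.
move=> hA; have := hA (col2 i i 1 0).
by rewrite qform_col2 rmorph0 rmorph1 !mul0r !mulr0 !addr0 !mul1r mul0r addr0.
Qed.

Lemma quadratic_ge0_minor (N a d : R) :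
  (forall l, 0 <= l ^+ 2 * N * a - 2 * l * N + d) -> 0 <= a -> 0 <= d -> 0 <= N ->
  N <= a * d.
Proof.
move=> h a0 d0 N0.
have [a_gt0|] := ltrP 0 a.
  have := h a^-1; set b := a^-1 => hb.
  have ab : a * b = 1 by rewrite /b mulfV // gt_eqF.
  have bNa : b ^+ 2 * N * a = b * N.
    by rewrite expr2 -mulrA (mulrC N) mulrA -(mulrA b) (mulrC b a) ab mulr1.
  rewrite bNa in hb.
  have : 0 <= a * (d - b * N) by rewrite mulr_ge0 //; lra.
  by rewrite mulrBr mulrA ab mul1r subr_ge0.
rewrite le_eqVlt ltNge a0 orbF => /eqP a0'.
have [N_gt0|] := ltrP 0 N; last by rewrite a0' mul0r; lra.
have := h ((d + 1) / N); set b := (d + 1) / N => hb.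
have Nb : N * b = d + 1 by rewrite /b mulrC divfK // gt_eqF.
rewrite a0' in hb; nra.
Qed.

Lemma psdmx_minor n (A : 'M[C]_n) i j : psdmx A -> adjmx A = A -> i != j ->
  sqnormc (A i j) <= Re (A i i) * Re (A j j).
Proof.
move=> hA hH ij; rewrite /sqnormc.
have [Aii_real Aii_ge0] := ge0cP (psdmx_diag i hA).
have [Ajj_real Ajj_ge0] := ge0cP (psdmx_diag j hA).
apply: quadratic_ge0_minor => //; last by rewrite addr_ge0 // sqr_ge0.
move=> l; have := hA (col2 i j ((- l)%:C%C * A i j) 1).
rewrite qform_col2 (hermmxE i j hH).
move: (A i i) (A j j) (A i j) Aii_real Ajj_real Aii_ge0 Ajj_ge0
  => [a1 a2] [d1 d2] [m1 m2] /= -> -> _ _.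
rewrite lecE /= => /andP[_] /le_trans; apply; rewrite le_eqVlt; apply/orP; left.
by apply/eqP; ring.
Qed.

Lemma psdmx_rank1 n (v : 'cV[C]_n) : psdmx (v *m adjmx v).
Proof.
move=> w; have e : adjmx v *m w = adjmx (adjmx w *m v) by rewrite adjmx_mul adjmxK.
rewrite /qform mulmxA -mulmxA e mxE big_ord1.
have -> M : adjmx M ord0 0 = conjc (M 0 ord0) :> C by rewrite !mxE.
exact: mulcJ_ge0.
Qed.

Lemma rank1mxE n (v : 'cV[C]_n) i j : (v *m adjmx v) i j = v i 0 * conjc (v j 0).
Proof. by rewrite mxE big_ord1 !mxE. Qed.

Lemma density_rank1 n (v : 'cV[C]_n) : \tr (v *m adjmx v) = 1 -> density (v *m adjmx v).
Proof. by split => //; [rewrite adjmx_mul adjmxK | exact: psdmx_rank1]. Qed.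

(** * Qubit states and the cost operator *)

Lemma ord2_ind (P : 'I_2 -> Prop) : P i0 -> P i1 -> forall i, P i.
Proof. by move=> h0 h1 [[|[|//]] Hi]; [move: h0|move: h1]; congr P; apply: val_inj. Qed.

Lemma sum_ord2 (F : 'I_2 -> C) : \sum_(i < 2) F i = F i0 + F i1.
Proof. by rewrite big_ord_recl big_ord1; congr (F _ + F _); apply: val_inj. Qed.

Lemma sum_ord2x2 (F : 'I_(2 * 2) -> C) :
  \sum_(I < 2 * 2) F I = F i00 + F i01 + F i10 + F i11.
Proof.
rewrite (reindex (@mxtens_index 2 2)) /=; last first.
  by exists (@mxtens_unindex 2 2) => i _; rewrite (mxtens_indexK, mxtens_unindexK).
transitivity (\sum_(p : 'I_2 * 'I_2) F (ix p.1 p.2)); first by apply: eq_bigr => -[].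
by rewrite -(pair_bigA _ (fun i k => F (ix i k))) /= !sum_ord2 addrA.
Qed.

Lemma mxtrace2 (A : 'M[C]_2) : \tr A = A i0 i0 + A i1 i1.
Proof. exact: sum_ord2. Qed.

Lemma mxtrace2x2 (P : 'M[C]_(2 * 2)) : \tr P = P i00 i00 + P i01 i01 + P i10 i10 + P i11 i11.
Proof. exact: sum_ord2x2. Qed.

Lemma mulmx2E (A B : 'M[C]_2) i j : (A *m B) i j = A i i0 * B i0 j + A i i1 * B i1 j.
Proof. by rewrite mxE sum_ord2. Qed.

Lemma mx2E (a b c d : C) :
  [/\ mx2 a b c d i0 i0 = a, mx2 a b c d i0 i1 = b, mx2 a b c d i1 i0 = c
    & mx2 a b c d i1 i1 = d].
Proof. by rewrite /mx2 !mxE. Qed.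

Lemma ptr_dualE (P : 'M[C]_(2 * 2)) i j :
  ptr_dual P i j = P (ix i i0) (ix j i0) + P (ix i i1) (ix j i1).
Proof. by rewrite mxE sum_ord2. Qed.

Lemma ptr_HE (P : 'M[C]_(2 * 2)) k l :
  ptr_H P k l = P (ix i0 k) (ix i0 l) + P (ix i1 k) (ix i1 l).
Proof. by rewrite mxE sum_ord2. Qed.

Lemma CzE i k j l : @Cz R (ix i k) (ix j l) =
  if (i == j) && (k == l) && (i != k) then 4 else 0.
Proof.
rewrite /Cz mxE sum_ord2x2 !mxE !mxtens_indexK /=.
move: i k j l; apply: ord2_ind; apply: ord2_ind; apply: ord2_ind; apply: ord2_ind;
  rewrite /= ?mxE /=; ring.
Qed.

Definition transport_cost (P : 'M[C]_(2 * 2)) : R := Re (\tr (P *m @Cz R)).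

Lemma transport_costE P : transport_cost P = 4 * (Re (P i01 i01) + Re (P i10 i10)).
Proof.
rewrite /transport_cost; have -> : \tr (P *m @Cz R) = 4 * (P i01 i01 + P i10 i10).
  by rewrite /mxtrace sum_ord2x2 !mxE !sum_ord2x2 !CzE /=; ring.
by move: (P i01 i01) (P i10 i10) => [? ?] [? ?] /=; ring.
Qed.

Definition qubit (p q : R) (m : C) : 'M[C]_2 := mx2 (Complex p 0) m (conjc m) (Complex q 0).

Lemma qubit00 p q m : qubit p q m i0 i0 = Complex p 0. Proof. by rewrite mxE. Qed.
Lemma qubit01 p q m : qubit p q m i0 i1 = m. Proof. by rewrite mxE. Qed.
Lemma qubit10 p q m : qubit p q m i1 i0 = conjc m. Proof. by rewrite mxE. Qed.
Lemma qubit11 p q m : qubit p q m i1 i1 = Complex q 0. Proof. by rewrite mxE. Qed.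
Definition qubitE := (qubit00, qubit01, qubit10, qubit11).

Lemma adjmx_qubit p q m : adjmx (qubit p q m) = qubit p q m.
Proof.
by apply/matrixP; apply: ord2_ind; apply: ord2_ind; rewrite !mxE /= ?conjcK ?oppr0.
Qed.

Lemma density_qubit_eq (r : 'M[C]_2) : density r ->
  r = qubit (Re (r i0 i0)) (Re (r i1 i1)) (r i0 i1).
Proof.
case=> hH hP _; have [Im00 _] := ge0cP (psdmx_diag i0 hP).
have [Im11 _] := ge0cP (psdmx_diag i1 hP).
apply/matrixP; apply: ord2_ind; apply: ord2_ind; rewrite qubitE -?(hermmxE _ _ hH) //.
- by move: (r i0 i0) Im00 => [] /= ? ? ->.
- by move: (r i1 i1) Im11 => [] /= ? ? ->.
Qed.

Lemma density_qubit p q m : density (qubit p q m) ->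
  [/\ 0 <= p, 0 <= q, p + q = 1 & sqnormc m <= p * q].
Proof.
case=> hH hP htr.
have := psdmx_minor hP hH (isT : i0 != ord_max); rewrite !qubitE /=.
have := psdmx_diag i0 hP; have := psdmx_diag i1 hP; rewrite !qubitE !lecE /=.
move=> /andP[_ ->] /andP[_ ->] ->; split=> //.
by move: htr; rewrite mxtrace2 !qubitE => -[].
Qed.

Lemma density_diag_qubit (p q : R) : 0 <= p -> 0 <= q -> p + q = 1 -> density (qubit p q 0).
Proof.
move=> p0 q0 pq; split.
- exact: adjmx_qubit.
- move=> v; rewrite -/(qform _ _) qformE !sum_ord2 !qubitE rmorph0.
  have -> : forall a b : C, conjc a * Complex p 0 * a + conjc a * 0 * b
      + (conjc b * 0 * a + conjc b * Complex q 0 * b)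
     = (a * conjc a) * Complex p 0 + (b * conjc b) * Complex q 0 by move=> a b; ring.
  by rewrite addr_ge0 // mulr_ge0 ?mulcJ_ge0 // lecE /= eqxx.
- rewrite mxtrace2 !qubitE; apply/eqP; rewrite eq_complex /= pq addr0.
  by rewrite !eqxx.
Qed.

Lemma bloch_third_qubit p q m : bloch (qubit p q m) third = p - q.
Proof.
rewrite /bloch /pauli /= mxtrace2 !mulmx2E /sigma3 !qubitE.
case: (mx2E (1 : C) 0 0 (-1)) => -> -> -> ->.
by case: m => a b /=; ring.
Qed.

Lemma bloch_norm_qubit p q m :
  bloch_norm (qubit p q m) = Num.sqrt ((p - q) ^+ 2 + 4 * sqnormc m).
Proof.
rewrite /bloch_norm !big_ord_recl big_ord0 /bloch /pauli /=.
rewrite !mxtrace2 !mulmx2E !qubitE /sigma1 /sigma2 /sigma3.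
case: (mx2E (1 : C) 0 0 (-1)) => -> -> -> ->.
case: (mx2E (0 : C) 1 1 0) => -> -> -> ->.
case: (mx2E (0 : C) (- Complex 0 1) (Complex 0 1) 0) => -> -> -> ->.
by congr Num.sqrt; rewrite /sqnormc; case: m => a b /=; ring.
Qed.

Variant qubit_spec (r : 'M[C]_2) : Prop :=
  QubitSpec p q m of r = qubit p q m & 0 <= p & 0 <= q & p + q = 1 & sqnormc m <= p * q.

Lemma qubitP r : density r -> qubit_spec r.
Proof.
move=> hr; have er := density_qubit_eq hr.
by rewrite er in hr; case: (density_qubit hr) => *; apply: QubitSpec er _ _ _ _.
Qed.

Lemma tr_qubit p q (m : C) : (qubit p q m)^T = qubit p q (conjc m).
Proof. by apply/matrixP; apply: ord2_ind; apply: ord2_ind; rewrite !mxE /= ?conjcK. Qed.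

(** * Couplings and the invariances of [D_z] *)

Definition unitarymx n (U : 'M[C]_n) := adjmx U *m U = 1%:M.

Lemma density_unitary_conj n (U A : 'M[C]_n) :
  unitarymx U -> density A -> density (U *m A *m adjmx U).
Proof.
move=> hU [hH hP htr]; split.
- by rewrite !adjmx_mul adjmxK hH mulmxA.
- move=> v; rewrite -/(qform _ _).
  have -> : qform (U *m A *m adjmx U) v = qform A (adjmx U *m v).
    by rewrite /qform adjmx_mul adjmxK !mulmxA.
  exact: hP.
- by rewrite mxtrace_mulC mulmxA hU mul1mx.
Qed.

Lemma Re_add (a b : C) : Re (a + b) = Re a + Re b. Proof. by case: a; case: b. Qed.

Lemma coupling_qubitP p q m p' q' n (P : 'M[C]_(2 * 2)) :
  coupling (qubit p q m) (qubit p' q' n) P ->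
  let a := Re (P i00 i00) in let x := Re (P i01 i01) in
  let y := Re (P i10 i10) in let d := Re (P i11 i11) in
  [/\ [/\ 0 <= a, 0 <= x, 0 <= y & 0 <= d],
      [/\ a + x = p', y + d = q', a + y = p & x + d = q],
      P i00 i01 + P i10 i11 = conjc m,
      sqnormc (P i00 i01) <= a * x &
      sqnormc (P i10 i11) <= y * d].
Proof.
case=> -[hH hP _] [hd]; rewrite tr_qubit => hh a x y d.
have entry (M N : 'M[C]_2) i j : M = N -> M i j = N i j by move=> ->.
have := entry _ _ i0 i0 hd; have := entry _ _ i1 i1 hd.
have := entry _ _ i0 i0 hh; have := entry _ _ i1 i1 hh; have := entry _ _ i0 i1 hh.
rewrite !ptr_dualE !ptr_HE !qubitE => e01 e11 e00 h11 h00.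
split.
- by split; apply: (proj2 (ge0cP (psdmx_diag _ hP))).
- by split; [move: h00|move: h11|move: e00|move: e11] => /(congr1 (@complex.Re R));
    rewrite Re_add.
- exact: e01.
- exact: psdmx_minor hP hH (isT : i00 != i01).
- exact: psdmx_minor hP hH (isT : i10 != i11).
Qed.

Lemma transport_cost_ge0 (P : 'M[C]_(2 * 2)) : density P -> 0 <= transport_cost P.
Proof.
case=> _ hP _; rewrite transport_costE.
have [_ x0] := ge0cP (psdmx_diag i01 hP).
have [_ y0] := ge0cP (psdmx_diag i10 hP).
by rewrite mulr_ge0 // addr_ge0.
Qed.

Lemma Dz2_le_cost (r w : 'M[C]_2) P : coupling r w P -> Dz2 r w <= transport_cost P.
Proof.
move=> hc; apply: ge_inf; last by exists P.
by exists 0 => y [Q [hQ _] <-]; exact: transport_cost_ge0.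
Qed.

Lemma Dz2_ge (r w : 'M[C]_2) L P0 : coupling r w P0 ->
  (forall P, coupling r w P -> L <= transport_cost P) -> L <= Dz2 r w.
Proof.
move=> h0 h; apply: lb_le_inf; first by exists (transport_cost P0), P0.
by move=> y [Q hQ <-]; apply: h.
Qed.

(* When there is no coupling, [inf set0 = 0] by convention. *)
Lemma Dz2_ge0 (r w : 'M[C]_2) : 0 <= Dz2 r w.
Proof.
have [[P hP]|nP] := pselect (exists P, coupling r w P).
  by apply: (Dz2_ge hP) => Q [hQ _]; apply: transport_cost_ge0.
rewrite /Dz2 (_ : [set _ | P in _]%classic = set0) ?inf0 //.
by apply/seteqP; split => // y [Q hQ _]; apply: nP; exists Q.
Qed.

Lemma Dz2_eq_by_couplings (r w r' w' : 'M[C]_2) (f g : 'M[C]_(2 * 2) -> 'M[C]_(2 * 2)) :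
  (forall P, coupling r w P -> coupling r' w' (f P) /\ transport_cost (f P) = transport_cost P) ->
  (forall P, coupling r' w' P -> coupling r w (g P) /\ transport_cost (g P) = transport_cost P) ->
  Dz2 r' w' = Dz2 r w.
Proof.
move=> hf hg; rewrite /Dz2; congr inf; apply/seteqP; split => y [P hP <-].
- by have [? ?] := hg P hP; exists (g P).
- by have [? ?] := hf P hP; exists (f P).
Qed.

Lemma diag_conjE n (w : 'rV[C]_n) (A : 'M[C]_n) :
  diag_mx w *m A *m adjmx (diag_mx w) = \matrix_(i, j) (w 0 i * A i j * conjc (w 0 j)).
Proof.
rewrite /adjmx map_diag_mx tr_diag_mx mul_diag_mx mul_mx_diag.
by apply/matrixP => i j; rewrite !mxE.
Qed.

Lemma unitarymx_diag n (w : 'rV[C]_n) :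
  (forall i, w 0 i * conjc (w 0 i) = 1) -> unitarymx (diag_mx w).
Proof.
move=> hw; rewrite /unitarymx /adjmx map_diag_mx tr_diag_mx mul_diag_mx.
by apply/matrixP => i j; rewrite !mxE mulrnAr (mulrC (conjc _)) hw.
Qed.

Definition phase_row (u v : C) : 'rV[C]_(2 * 2) :=
  \row_I ((if (mxtens_unindex I).1 == i0 then u else 1)
          * (if (mxtens_unindex I).2 == i0 then 1 else v)).

(* Conjugation by the diagonal matrix [diag(u, 1) (x) diag(1, v)]. *)
Definition phase_conj (u v : C) (P : 'M[C]_(2 * 2)) :=
  diag_mx (phase_row u v) *m P *m adjmx (diag_mx (phase_row u v)).

Section Phase.
Variables u v : C.
Hypotheses (hu : u * conjc u = 1) (hv : v * conjc v = 1).

Let al (i : 'I_2) : C := if i == i0 then u else 1.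
Let be (k : 'I_2) : C := if k == i0 then 1 else v.

Let al0 : al i0 = u. Proof. by []. Qed.
Let al1 : al i1 = 1. Proof. by []. Qed.
Let be0 : be i0 = 1. Proof. by []. Qed.
Let be1 : be i1 = v. Proof. by []. Qed.

Let alK i : al i * conjc (al i) = 1.
Proof. by rewrite /al; case: ifP; rewrite ?rmorph1 ?mulr1. Qed.
Let beK k : be k * conjc (be k) = 1.
Proof. by rewrite /be; case: ifP; rewrite ?rmorph1 ?mulr1. Qed.

Let phase_conjE P i k j l :
  phase_conj u v P (ix i k) (ix j l) = al i * be k * P (ix i k) (ix j l) * conjc (al j * be l).
Proof. by rewrite /phase_conj diag_conjE !mxE !mxtens_indexK. Qed.

Let phase_conj_diag P I : phase_conj u v P I I = P I I.
Proof.
case: (mxtens_indexP I) => i k; rewrite phase_conjE rmorphM.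
transitivity (al i * conjc (al i) * (be k * conjc (be k)) * P (ix i k) (ix i k)).
  by ring.
by rewrite alK beK !mul1r.
Qed.

Let ptr_dual_phase P i j :
  ptr_dual (phase_conj u v P) i j = al i * ptr_dual P i j * conjc (al j).
Proof.
rewrite !ptr_dualE !phase_conjE !rmorphM.
transitivity (al i * conjc (al j) * ((be i0 * conjc (be i0)) * P (ix i i0) (ix j i0)
   + (be i1 * conjc (be i1)) * P (ix i i1) (ix j i1))); first by ring.
by rewrite !beK !mul1r; ring.
Qed.

Let ptr_H_phase P k l : ptr_H (phase_conj u v P) k l = be k * ptr_H P k l * conjc (be l).
Proof.
rewrite !ptr_HE !phase_conjE !rmorphM.
transitivity (be k * conjc (be l) * ((al i0 * conjc (al i0)) * P (ix i0 k) (ix i0 l)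
   + (al i1 * conjc (al i1)) * P (ix i1 k) (ix i1 l))); first by ring.
by rewrite !alK !mul1r; ring.
Qed.

Lemma coupling_phase p q m p' q' n (P : 'M[C]_(2 * 2)) :
  coupling (qubit p q m) (qubit p' q' n) P ->
  coupling (qubit p q (v * m)) (qubit p' q' (u * n)) (phase_conj u v P)
  /\ transport_cost (phase_conj u v P) = transport_cost P.
Proof.
case=> hP [hd hh]; split; last by rewrite !transport_costE !phase_conj_diag.
split; first by apply: density_unitary_conj hP; apply: unitarymx_diag => I;
  rewrite mxE rmorphM mulrACA; case: (mxtens_unindex I) => i k /=; rewrite alK beK mulr1.
rewrite tr_qubit in hh.
split; apply/matrixP; apply: ord2_ind; apply: ord2_ind.
all: rewrite ?ptr_dual_phase ?ptr_H_phase ?hd ?hh ?tr_qubit !qubitE ?al0 ?al1 ?be0 ?be1.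
all: rewrite ?rmorph1 ?mulr1 ?mul1r //.
- by rewrite -[X in _ = X]mul1r -hu; ring.
- by rewrite rmorphM mulrC.
- by rewrite rmorphM mulrC.
- by rewrite !conjcK.
- by rewrite -[X in _ = X]mul1r -hv; ring.
Qed.

End Phase.

Lemma Dz2_phase p q (m : C) p' q' n u v : u * conjc u = 1 -> v * conjc v = 1 ->
  Dz2 (qubit p q (v * m)) (qubit p' q' (u * n)) = Dz2 (qubit p q m) (qubit p' q' n).
Proof.
move=> hu hv; have unit_conj (z : C) : z * conjc z = 1 -> conjc z * conjc (conjc z) = 1.
  by rewrite conjcK mulrC.
have cancel (z x : C) : z * conjc z = 1 -> conjc z * (z * x) = x.
  by move=> hz; rewrite mulrA (mulrC (conjc z)) hz mul1r.
apply: (Dz2_eq_by_couplings (f := phase_conj u v) (g := phase_conj (conjc u) (conjc v))) => P hP.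
- exact: coupling_phase.
- by have := coupling_phase (unit_conj _ hu) (unit_conj _ hv) hP; rewrite !cancel.
Qed.

Lemma Dz2_qubit_sqnormc p q (m m' : C) p' q' n n' :
  sqnormc m' = sqnormc m -> sqnormc n' = sqnormc n ->
  Dz2 (qubit p q m') (qubit p' q' n') = Dz2 (qubit p q m) (qubit p' q' n).
Proof.
move=> /sqnormc_eq_phase[v [hv ->]] /sqnormc_eq_phase[u [hu ->]].
exact: Dz2_phase.
Qed.

Definition revmx n (A : 'M[C]_n) : 'M[C]_n := \matrix_(i, j) A (rev_ord i) (rev_ord j).

Lemma revmxK n : involutive (@revmx n).
Proof. by move=> A; apply/matrixP => i j; rewrite !mxE !rev_ordK. Qed.

Lemma revmx_tr n (A : 'M[C]_n) : revmx A^T = (revmx A)^T.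
Proof. by apply/matrixP => i j; rewrite !mxE. Qed.

Lemma unitarymx_perm n (s : 'S_n) : unitarymx (perm_mx s : 'M[C]_n).
Proof. by rewrite /unitarymx /adjmx map_perm_mx tr_perm_mx -perm_mxM mulVg perm_mx1. Qed.

Lemma revmx_perm_conj n (A : 'M[C]_n) (s := perm (@rev_ord_inj n)) :
  revmx A = perm_mx s *m A *m adjmx (perm_mx s).
Proof.
rewrite /adjmx map_perm_mx tr_perm_mx -row_permE -col_permE.
by apply/matrixP => i j; rewrite !mxE !permE.
Qed.

Lemma density_revmx n (A : 'M[C]_n) : density A -> density (revmx A).
Proof. by rewrite revmx_perm_conj; apply: density_unitary_conj; apply: unitarymx_perm. Qed.

Lemma rev_ord2_0 : rev_ord i0 = i1. Proof. exact: val_inj. Qed.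
Lemma rev_ord2_1 : rev_ord i1 = i0. Proof. exact: val_inj. Qed.

Lemma rev_ord_tens i k : rev_ord (ix i k) = ix (rev_ord i) (rev_ord k).
Proof. by move: i k; apply: ord2_ind; apply: ord2_ind; apply: val_inj. Qed.

Lemma revmx_tensE (P : 'M[C]_(2 * 2)) i k j l :
  revmx P (ix i k) (ix j l) = P (ix (rev_ord i) (rev_ord k)) (ix (rev_ord j) (rev_ord l)).
Proof. by rewrite mxE !rev_ord_tens. Qed.

Lemma ptr_dual_revmx (P : 'M[C]_(2 * 2)) : ptr_dual (revmx P) = revmx (ptr_dual P).
Proof.
apply/matrixP => i j.
by rewrite ptr_dualE !revmx_tensE rev_ord2_0 rev_ord2_1 mxE ptr_dualE addrC.
Qed.

Lemma ptr_H_revmx (P : 'M[C]_(2 * 2)) : ptr_H (revmx P) = revmx (ptr_H P).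
Proof.
apply/matrixP => k l.
by rewrite ptr_HE !revmx_tensE rev_ord2_0 rev_ord2_1 mxE ptr_HE addrC.
Qed.

Lemma transport_cost_revmx (P : 'M[C]_(2 * 2)) : transport_cost (revmx P) = transport_cost P.
Proof. by rewrite !transport_costE !revmx_tensE rev_ord2_0 rev_ord2_1 addrC. Qed.

Lemma coupling_revmx (r w : 'M[C]_2) P :
  coupling r w P -> coupling (revmx r) (revmx w) (revmx P).
Proof.
case=> hP [hd hh]; split; first exact: density_revmx.
by rewrite ptr_dual_revmx ptr_H_revmx hd hh revmx_tr.
Qed.

Lemma Dz2_revmx (r w : 'M[C]_2) : Dz2 (revmx r) (revmx w) = Dz2 r w.
Proof.
apply: (Dz2_eq_by_couplings (f := @revmx _) (g := @revmx _)) => P hP.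
  by split; [exact: coupling_revmx | exact: transport_cost_revmx].
split; last exact: transport_cost_revmx.
by rewrite -[r]revmxK -[w]revmxK; exact: coupling_revmx.
Qed.

Lemma revmx_qubit p q (m : C) : revmx (qubit p q m) = qubit q p (conjc m).
Proof.
apply/matrixP; apply: ord2_ind; apply: ord2_ind;
  by rewrite mxE ?rev_ord2_0 ?rev_ord2_1 !qubitE ?conjcK.
Qed.

Lemma bloch_third_revmx (r : 'M[C]_2) : density r ->
  bloch (revmx r) third = - bloch r third.
Proof.
by case/qubitP=> p q m -> *; rewrite revmx_qubit !bloch_third_qubit opprB.
Qed.

Lemma bloch_norm_revmx (r : 'M[C]_2) : density r -> bloch_norm (revmx r) = bloch_norm r.
Proof.
case/qubitP=> p q m -> *.
by rewrite revmx_qubit !bloch_norm_qubit sqnormc_conj -opprB sqrrN.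
Qed.

(** * Explicit transport costs *)

Lemma adjmx_tens (A B : 'M[C]_2) : adjmx (A *t B) = adjmx A *t adjmx B.
Proof.
apply/matrixP => I J; case: (mxtens_indexP I) => i k; case: (mxtens_indexP J) => j l.
by rewrite tensmxE !mxE !mxtens_indexK rmorphM.
Qed.

Lemma psdmx_tr (B : 'M[C]_2) : psdmx B -> psdmx B^T.
Proof.
move=> hB v; have := hB (map_mx conjc v).
rewrite !qformE !sum_ord2 !mxE !conjcK => /le_trans; apply.
by rewrite le_eqVlt; apply/orP; left; apply/eqP; ring.
Qed.

Lemma psdmx_diag_tens (p q : R) (B : 'M[C]_2) :
  0 <= p -> 0 <= q -> psdmx B -> psdmx (qubit p q 0 *t B).
Proof.
move=> p0 q0 hB v; pose w i : 'cV[C]_2 := \col_k v (ix i k) 0.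
have -> : qform (qubit p q 0 *t B) v =
    Complex p 0 * qform B (w i0) + Complex q 0 * qform B (w i1).
  by rewrite !qformE !sum_ord2x2 !sum_ord2 !tensmxE !qubitE !mxE rmorph0; ring.
by rewrite addr_ge0 // mulr_ge0 // lecE /= eqxx.
Qed.

Lemma coupling_diag_product p q (m : C) p' q' :
  0 <= p' -> 0 <= q' -> p' + q' = 1 -> density (qubit p q m) ->
  coupling (qubit p q m) (qubit p' q' 0) (qubit p' q' 0 *t (qubit p q m)^T).
Proof.
move=> p0 q0 pq hr; have [_ hP _] := hr; have [_ _ pq1 _] := density_qubit hr.
have one_c (a b : R) : a + b = 1 -> Complex a 0 + Complex b 0 = 1 :> C.
  by move=> ab; apply/eqP; rewrite eq_complex /= ab addr0 !eqxx.
split; [split|split].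
- by rewrite adjmx_tens tr_qubit !adjmx_qubit.
- by apply: psdmx_diag_tens => //; apply: psdmx_tr.
- rewrite tr_qubit mxtrace2x2 !tensmxE !qubitE.
  apply/eqP; rewrite eq_complex /=; apply/andP; split; apply/eqP; last by ring.
  by transitivity ((p' + q') * (p + q)); [ring | rewrite pq pq1 mulr1].
- apply/matrixP => i j; rewrite tr_qubit ptr_dualE !tensmxE -mulrDr !qubitE one_c //.
  by rewrite mulr1.
- apply/matrixP => i j; rewrite ptr_HE !tensmxE -mulrDl !qubitE one_c //.
  by rewrite mul1r.
Qed.

Lemma transport_cost_diag_product p q (m : C) p' q' :
  transport_cost (qubit p' q' 0 *t (qubit p q m)^T) = 4 * (p' * q + q' * p).
Proof. by rewrite tr_qubit transport_costE !tensmxE !qubitE /=; ring. Qed.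

Lemma transport_cost_ge_diag p q (m : C) p' q' n P :
  coupling (qubit p q m) (qubit p' q' n) P -> 4 * `|p - p'| <= transport_cost P.
Proof.
case/coupling_qubitP => -[_ x0 y0 _] [e1 _ e3 _] _ _ _.
rewrite transport_costE ler_pM2l // ler_norml; apply/andP; split; lra.
Qed.

Lemma Dz2_qubit_diag p q (m : C) p' q' :
  density (qubit p q m) -> 0 <= p' -> 0 <= q' -> p' + q' = 1 ->
  4 * `|p - p'| <= Dz2 (qubit p q m) (qubit p' q' 0) <= 4 * (p' * q + q' * p).
Proof.
move=> hr p0 q0 pq; have hc := coupling_diag_product p0 q0 pq hr.
apply/andP; split; first by apply: (Dz2_ge hc) => P; apply: transport_cost_ge_diag.
by rewrite -(transport_cost_diag_product p q m); apply: Dz2_le_cost.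
Qed.

Definition proj0 : 'M[C]_2 := qubit 1 0 0.

Lemma density_proj0 : density proj0.
Proof. exact: density_diag_qubit ler01 (lexx 0) (addr0 1). Qed.

Lemma Dz2_qubit_proj0 p q (m : C) : density (qubit p q m) ->
  Dz2 (qubit p q m) proj0 = 4 * q.
Proof.
move=> hr; have [p0 q0 pq _] := density_qubit hr.
have /andP[] := Dz2_qubit_diag hr ler01 (lexx 0) (addr0 1).
have -> : `|p - 1| = q by rewrite (_ : p - 1 = - q) ?normrN ?ger0_norm //; lra.
by rewrite mul1r mul0r addr0 => ? ?; apply/le_anti/andP.
Qed.

Lemma le_of_sqr_le (u w : R) : 0 <= w -> u ^+ 2 <= w ^+ 2 -> u <= w.
Proof.
move=> w0 h; have [//|uw] := lerP u w.
have : 0 < (u - w) * (u + w) by apply: mulr_gt0; lra.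
rewrite (_ : (u - w) * (u + w) = u ^+ 2 - w ^+ 2); first by lra.
by ring.
Qed.

Lemma sqnormc_add_le (b1 b2 : C) :
  sqnormc (b1 + b2) <= sqnormc b1 + sqnormc b2 + 2 * Num.sqrt (sqnormc b1 * sqnormc b2).
Proof.
case: b1 b2 => u1 v1 [u2 v2]; rewrite /sqnormc /=.
have cs : (u1 * u2 + v1 * v2) ^+ 2 <= (u1 ^+ 2 + v1 ^+ 2) * (u2 ^+ 2 + v2 ^+ 2).
  rewrite -subr_ge0 (_ : _ - _ = (u1 * v2 - v1 * u2) ^+ 2) ?sqr_ge0 //; ring.
have : u1 * u2 + v1 * v2 <= Num.sqrt ((u1 ^+ 2 + v1 ^+ 2) * (u2 ^+ 2 + v2 ^+ 2)).
  by apply: le_of_sqr_le; rewrite ?sqrtr_ge0 // sqr_sqrtr // mulr_ge0 // addr_ge0 ?sqr_ge0.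
have -> : (u1 + u2) ^+ 2 + (v1 + v2) ^+ 2
    = u1 ^+ 2 + v1 ^+ 2 + (u2 ^+ 2 + v2 ^+ 2) + 2 * (u1 * u2 + v1 * v2) by ring.
lra.
Qed.

Lemma self_coupling_real_bound (T x p q G : R) :
  0 <= x -> 0 <= G -> G ^+ 2 = (p - x) * (q - x) -> p + q = 1 -> T <= p * q ->
  T <= x * (1 - 2 * x + 2 * G) -> T <= x * (1 + Num.sqrt (4 * (p * q) - 4 * T)).
Proof.
move=> x0 G0 GG pq Tpq hT; set s := Num.sqrt _.
have s0 : 0 <= s := sqrtr_ge0 _.
have ss : s ^+ 2 = 4 * (p * q) - 4 * T by rewrite sqr_sqrtr //; lra.
rewrite mulrDr mulr1.
have [Lneg|Lpos] := ltrP (T - x + 2 * x ^+ 2) 0.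
  by have := mulr_ge0 x0 s0; have := sqr_ge0 x; lra.
(* Square [T - x + 2 x^2 <= 2 x G] and use [G^2 = (p - x) (q - x)]
   to get [(T - x)^2 <= (x s)^2]. *)
have L2 : (T - x + 2 * x ^+ 2) ^+ 2 <= (2 * x * G) ^+ 2.
  by rewrite ler_sqr ?nnegrE ?mulr_ge0 //; lra.
have : (T - x) ^+ 2 <= (x * s) ^+ 2.
  have f1 : (T - x + 2 * x ^+ 2) ^+ 2 = (T - x) ^+ 2 + 4 * x ^+ 2 * (T - x + x ^+ 2).
    by ring.
  have f2 : (2 * x * G) ^+ 2 = x ^+ 2 * (4 * (p * q) - 4 * T) + 4 * x ^+ 2 * (T - x + x ^+ 2).
    by rewrite exprMn GG (_ : q = 1 - p); [ring | lra].
  by rewrite exprMn ss; rewrite f1 f2 in L2; lra.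
by move/le_of_sqr_le => /(_ (mulr_ge0 x0 s0)); lra.
Qed.

Lemma self_coupling_bound (b1 b2 : C) (a x d p q : R) :
  0 <= a -> 0 <= x -> 0 <= d -> sqnormc b1 <= a * x -> sqnormc b2 <= x * d ->
  a + x = p -> x + d = q -> p + q = 1 -> sqnormc (b1 + b2) <= p * q ->
  sqnormc (b1 + b2) <= x * (1 + Num.sqrt (4 * (p * q) - 4 * sqnormc (b1 + b2))).
Proof.
move=> a0 x0 d0 h1 h2 ep eq pq Tpq.
apply: (self_coupling_real_bound x0 (sqrtr_ge0 (a * d))) => //.
  have -> : p - x = a by lra.
  have -> : q - x = d by lra.
  by rewrite sqr_sqrtr // mulr_ge0.
apply: (le_trans (sqnormc_add_le b1 b2)).
have -> : x * (1 - 2 * x + 2 * Num.sqrt (a * d))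
    = a * x + x * d + 2 * Num.sqrt ((a * x) * (x * d)).
  rewrite (_ : (a * x) * (x * d) = x ^+ 2 * (a * d)); last by ring.
  have -> : 1 - 2 * x = a + d by lra.
  by rewrite (sqrtrM (a * d) (sqr_ge0 x)) sqrtr_sqr ger0_norm //; ring.
apply: lerD; first exact: lerD.
by rewrite ler_pM2l // ler_wsqrtr // ler_pM // sqnormc_ge0.
Qed.

Definition self_dist2 (d t : R) : R := 8 * (t / (1 + Num.sqrt (4 * d - 4 * t))).

Lemma transport_cost_ge_self p q (m : C) P : p + q = 1 -> sqnormc m <= p * q ->
  coupling (qubit p q m) (qubit p q m) P -> self_dist2 (p * q) (sqnormc m) <= transport_cost P.
Proof.
move=> pq Tpq /coupling_qubitP[[a0 x0 y0 d0] [e1 e2 e3 e4] hb m1 m2].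
have xy : Re (P i01 i01) = Re (P i10 i10) by lra.
rewrite -xy in m2; rewrite -(sqnormc_conj m) -hb in Tpq *.
have := self_coupling_bound a0 x0 d0 m1 m2 e1 e4 pq Tpq.
rewrite transport_costE /self_dist2 -xy; set s := Num.sqrt _ => h.
have s0 : 0 <= s := sqrtr_ge0 _.
suff : sqnormc (P i00 i01 + P i10 i11) / (1 + s) <= Re (P i01 i01) by lra.
by rewrite ler_pdivrMr; lra.
Qed.

(* The optimal coupling is pure, [Pi = v v^*] with [v = A |00> + k m |01> + k m^* |10> + D |11>]:
   its weight on [|01>] is [x = k^2 t = t / (1 + s)], and [A = sqrt (p - x)], [D = sqrt (q - x)],
   [k = 1 / (A + D)]. *)
Lemma self_coupling_params (p q t : R) :
  0 <= p -> 0 <= q -> p + q = 1 -> 0 <= t -> t <= p * q ->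
  exists A D k : R, [/\ k * (A + D) = 1, A ^+ 2 + k ^+ 2 * t = p, D ^+ 2 + k ^+ 2 * t = q
                      & 8 * (k ^+ 2 * t) = self_dist2 (p * q) t].
Proof.
move=> p0 q0 pq t0 tpq; rewrite /self_dist2; set s := Num.sqrt _.
have s0 : 0 <= s := sqrtr_ge0 _.
have ss : s ^+ 2 = 4 * (p * q) - 4 * t by rewrite sqr_sqrtr //; lra.
set x := t / (1 + s).
have hx : x * (1 + s) = t by rewrite /x divfK // gt_eqF //; lra.
have x0 : 0 <= x by rewrite /x divr_ge0 //; lra.
have ad : (p - x) * (q - x) = (x + s / 2) ^+ 2.
  have -> : q = 1 - p by lra.
  rewrite (_ : q = 1 - p) in ss; last by lra.
  have -> : (x + s / 2) ^+ 2 = x ^+ 2 + x * s + s ^+ 2 / 4 by field.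
  by rewrite ss -hx; field.
have [a0 d0] : 0 <= p - x /\ 0 <= q - x.
  by have := sqr_ge0 (x + s / 2); rewrite -ad => h; split; nra.
pose A := Num.sqrt (p - x); pose D := Num.sqrt (q - x).
have AA : A ^+ 2 = p - x by rewrite sqr_sqrtr.
have DD : D ^+ 2 = q - x by rewrite sqr_sqrtr.
have AD : A * D = x + s / 2.
  by rewrite -sqrtrM // ad sqrtr_sqr ger0_norm //; lra.
have KK : (A + D) ^+ 2 = 1 + s.
  have -> : (A + D) ^+ 2 = A ^+ 2 + D ^+ 2 + 2 * (A * D) by ring.
  by rewrite AA DD AD; lra.
have K0 : A + D != 0 by apply/eqP => K0; move: KK; rewrite K0 expr0n /=; lra.
exists A, D, (A + D)^-1; rewrite mulVf //; split => //.
- by rewrite exprVn KK (mulrC _ t) -/x AA; lra.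
- by rewrite exprVn KK (mulrC _ t) -/x DD; lra.
- by rewrite exprVn KK (mulrC _ t).
Qed.

Lemma coupling_self_rank1 p q (m : C) (A D k : R) : p + q = 1 ->
  k * (A + D) = 1 -> A ^+ 2 + k ^+ 2 * sqnormc m = p -> D ^+ 2 + k ^+ 2 * sqnormc m = q ->
  exists2 P, coupling (qubit p q m) (qubit p q m) P
           & transport_cost P = 8 * (k ^+ 2 * sqnormc m).
Proof.
case: m => m1 m2; rewrite /sqnormc /= => pq hk hA hD.
have hm z : k * z * A + k * z * D = z by rewrite -mulrDr (mulrC k) -mulrA hk mulr1.
have := hm m1; have := hm m2 => h2 h1.
pose v : 'cV[C]_(2 * 2) := \col_I
  if I == i00 then Complex A 0 else if I == i01 then Complex (k * m1) (k * m2)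
  else if I == i10 then Complex (k * m1) (- (k * m2)) else Complex D 0.
have va : v i00 0 = Complex A 0 by rewrite mxE.
have vb : v i01 0 = Complex (k * m1) (k * m2) by rewrite mxE.
have vc : v i10 0 = Complex (k * m1) (- (k * m2)) by rewrite mxE.
have vd : v i11 0 = Complex D 0 by rewrite mxE.
exists (v *m adjmx v); last by rewrite transport_costE !rank1mxE vb vc /=; ring.
split; [apply: density_rank1 | rewrite tr_qubit; split].
- rewrite mxtrace2x2 !rank1mxE va vb vc vd /=.
  by apply/eqP; rewrite eq_complex /=; apply/andP; split; apply/eqP; lra.
- apply/matrixP; apply: ord2_ind; apply: ord2_ind;
  rewrite ptr_dualE !rank1mxE ?va ?vb ?vc ?vd !qubitE /=;
  by apply/eqP; rewrite eq_complex /=; apply/andP; split; apply/eqP; lra.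
- apply/matrixP; apply: ord2_ind; apply: ord2_ind;
  rewrite ptr_HE !rank1mxE ?va ?vb ?vc ?vd !qubitE /=;
  by apply/eqP; rewrite eq_complex /=; apply/andP; split; apply/eqP; lra.
Qed.

Lemma Dz2_qubit_self p q (m : C) : density (qubit p q m) ->
  Dz2 (qubit p q m) (qubit p q m) = self_dist2 (p * q) (sqnormc m).
Proof.
move=> /density_qubit[p0 q0 pq hm].
have [A [D [k [hk hA hD hval]]]] := self_coupling_params p0 q0 pq (sqnormc_ge0 m) hm.
have [P hP hcost] := coupling_self_rank1 pq hk hA hD.
apply/le_anti/andP; split; first by rewrite -hval -hcost; apply: Dz2_le_cost.
by apply: (Dz2_ge hP) => Q; apply: transport_cost_ge_self.
Qed.

Lemma self_dist2_0 (d : R) : self_dist2 d 0 = 0.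
Proof. by rewrite /self_dist2 mul0r mulr0. Qed.

Lemma self_dist2_lt (d t t' : R) :
  0 <= t -> t < t' -> t' <= d -> self_dist2 d t < self_dist2 d t'.
Proof.
move=> t0 tt' t'd; rewrite /self_dist2 ltr_pM2l //.
set s := Num.sqrt (4 * d - 4 * t); set s' := Num.sqrt (4 * d - 4 * t').
have s'0 : 0 <= s' := sqrtr_ge0 _.
have ss' : s' < s by rewrite ltr_sqrt; lra.
rewrite ltr_pdivrMr; last by lra.
rewrite mulrAC ltr_pdivlMr; last by lra.
nra.
Qed.

Lemma self_dist2_inj (d t t' : R) : 0 <= t <= d -> 0 <= t' <= d ->
  self_dist2 d t = self_dist2 d t' -> t = t'.
Proof.
move=> /andP[t0 td] /andP[t'0 t'd] e; apply/eqP; rewrite eq_le !leNgt.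
apply/andP; split; apply/negP => lt.
- by have := self_dist2_lt t'0 lt td; rewrite e ltxx.
- by have := self_dist2_lt t0 lt t'd; rewrite e ltxx.
Qed.

(** * Isometries *)

Lemma Dz_eq_Dz2 (r w r' w' : 'M[C]_2) : Dz r' w' = Dz r w <-> Dz2 r' w' = Dz2 r w.
Proof.
split => [|h]; last by rewrite /Dz h.
by rewrite /Dz => /eqP; rewrite eqr_sqrt ?Dz2_ge0 // => /eqP.
Qed.

Lemma qubit_eq_bloch p q (m : C) p' q' m' : p + q = 1 -> p' + q' = 1 ->
  bloch_norm (qubit p' q' m') = bloch_norm (qubit p q m) ->
  bloch (qubit p' q' m') third = bloch (qubit p q m) third ->
  [/\ p' = p, q' = q & sqnormc m' = sqnormc m].
Proof.
rewrite !bloch_norm_qubit !bloch_third_qubit => pq pq' /eqP + e3.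
have ge0 (z : R) (u : C) : 0 <= z ^+ 2 + 4 * sqnormc u.
  by rewrite addr_ge0 ?sqr_ge0 // mulr_ge0 ?sqnormc_ge0.
by rewrite eqr_sqrt // e3 => /eqP en; split; lra.
Qed.

Lemma Dz2_eq_of_bloch (r r' w w' : 'M[C]_2) :
  density r -> density r' -> density w -> density w' ->
  bloch_norm r' = bloch_norm r -> bloch r' third = bloch r third ->
  bloch_norm w' = bloch_norm w -> bloch w' third = bloch w third ->
  Dz2 r' w' = Dz2 r w.
Proof.
case/qubitP=> p q m -> _ _ pq _; case/qubitP=> p' q' m' -> _ _ pq' _.
case/qubitP=> c d n -> _ _ cd _; case/qubitP=> c' d' n' -> _ _ cd' _.
move=> /qubit_eq_bloch h1 /h1 {h1} [//|//|-> -> hm].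
move=> /qubit_eq_bloch h2 /h2 {h2} [//|//|-> -> hn].
exact: Dz2_qubit_sqnormc.
Qed.

Lemma bloch_eq_of_Dz2 (r r' : 'M[C]_2) : density r -> density r' ->
  Dz2 r' proj0 = Dz2 r proj0 -> Dz2 r' r' = Dz2 r r ->
  bloch_norm r' = bloch_norm r /\ bloch r' third = bloch r third.
Proof.
move=> hr hr'; case/qubitP: hr (hr) => p q m -> p0 q0 pq hm hr.
case/qubitP: hr' (hr') => p' q' m' -> p0' q0' pq' hm' hr'.
rewrite !Dz2_qubit_proj0 // !Dz2_qubit_self // => e0.
have eq : q' = q by move: e0; clear; lra.
have ep : p' = p by move: pq pq'; rewrite eq; clear; lra.
rewrite {}eq {}ep in hm' *; rewrite !bloch_norm_qubit !bloch_third_qubit.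
by move/self_dist2_inj => -> //; rewrite sqnormc_ge0.
Qed.

Lemma Dz2_self_eq0 (r : 'M[C]_2) : density r -> Dz2 r r = 0 ->
  exists p q, [/\ r = qubit p q 0, 0 <= p, 0 <= q & p + q = 1].
Proof.
move=> hr; case/qubitP: hr (hr) => p q m -> p0 q0 pq hm hr.
rewrite Dz2_qubit_self // => e.
have m0 : m = 0.
  apply: sqnormc_eq0; apply: (@self_dist2_inj (p * q)).
  - by rewrite sqnormc_ge0.
  - by rewrite lexx mulr_ge0.
  - by rewrite e self_dist2_0.
by exists p, q; rewrite m0.
Qed.

Lemma Dz2_proj0_self : Dz2 proj0 proj0 = 0.
Proof.
rewrite Dz2_qubit_self; last exact: density_proj0.
by rewrite /sqnormc /= expr0n /= addr0 self_dist2_0.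
Qed.

Lemma revmx_proj0 : revmx proj0 = qubit 0 1 0.
Proof. by rewrite revmx_qubit rmorph0. Qed.

Lemma qubit_far_diag (p q p' q' : R) :
  0 <= p -> 0 <= q -> p + q = 1 -> 0 <= p' -> 0 <= q' -> p' + q' = 1 ->
  1 <= p * q' + q * p' -> (p = 1 /\ q = 0) \/ (p = 0 /\ q = 1).
Proof.
move=> p0 q0 pq p0' q0' pq' h.
have e : p * p' + q * q' = (p + q) * (p' + q') - (p * q' + q * p') by ring.
rewrite pq pq' mul1r in e.
have := mulr_ge0 p0 p0'; have := mulr_ge0 q0 q0' => hq hp.
have pp' : p * p' = 0 by lra.
have qq' : q * q' = 0 by lra.
have [p_0|pn0] := eqVneq p 0; first by right; split; lra.
move/eqP: pp'; rewrite mulf_eq0 (negbTE pn0) /= => /eqP p'0.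
have q'1 : q' = 1 by lra.
by left; move: qq'; rewrite q'1 mulr1 => q_0; split; lra.
Qed.

Lemma Dz2_isometry_proj0 (Phi : 'M[C]_2 -> 'M[C]_2) :
  (forall r, density r -> density (Phi r)) ->
  (forall r w, density r -> density w -> Dz2 (Phi r) (Phi w) = Dz2 r w) ->
  Phi proj0 = proj0 \/ Phi proj0 = revmx proj0.
Proof.
move=> HPhi HD; have d0 := density_proj0; have d1 := density_revmx d0.
have s0 : Dz2 (Phi proj0) (Phi proj0) = 0 by rewrite HD // Dz2_proj0_self.
have s1 : Dz2 (Phi (revmx proj0)) (Phi (revmx proj0)) = 0.
  by rewrite HD // Dz2_revmx Dz2_proj0_self.
have [p [q [E0 p0 q0 pq]]] := Dz2_self_eq0 (HPhi _ d0) s0.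
have [p' [q' [E1 p0' q0' pq']]] := Dz2_self_eq0 (HPhi _ d1) s1.
have dE1 : density (qubit p' q' 0) by rewrite -E1; exact: HPhi.
have h4 : Dz2 (qubit p' q' 0) (qubit p q 0) = 4.
  by rewrite -E0 -E1 HD // revmx_proj0 Dz2_qubit_proj0 ?mulr1 // -revmx_proj0.
have /andP[_] := Dz2_qubit_diag dE1 p0 q0 pq; rewrite h4 => hle.
have far : 1 <= p * q' + q * p' by lra.
have [[p1 q1]|[p1 q1]] := qubit_far_diag p0 q0 pq p0' q0' pq' far; rewrite E0 p1 q1.
- by left.
- by right; rewrite revmx_proj0.
Qed.

Lemma bloch_of_Dz2_isometry (Phi : 'M[C]_2 -> 'M[C]_2) :
  (forall r, density r -> density (Phi r)) ->
  (forall r w, density r -> density w -> Dz2 (Phi r) (Phi w) = Dz2 r w) ->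
  (forall r, density r -> bloch_norm (Phi r) = bloch_norm r) /\
  ((forall r, density r -> bloch (Phi r) third = bloch r third) \/
   (forall r, density r -> bloch (Phi r) third = - bloch r third)).
Proof.
move=> HPhi HD; have d0 := density_proj0.
have [fix0|swap0] := Dz2_isometry_proj0 HPhi HD.
- have key r : density r ->
      bloch_norm (Phi r) = bloch_norm r /\ bloch (Phi r) third = bloch r third.
    move=> hr; apply: (bloch_eq_of_Dz2 hr (HPhi r hr)); last exact: HD.
    by rewrite -[in LHS]fix0; apply: HD.
  split; [|left] => r hr; have [hn h3] := key r hr; [exact: hn | exact: h3].
- have key r : density r -> bloch_norm (revmx (Phi r)) = bloch_norm r
                            /\ bloch (revmx (Phi r)) third = bloch r third.
    move=> hr; apply: (bloch_eq_of_Dz2 hr (density_revmx (HPhi r hr))).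
    + by rewrite -(Dz2_revmx (revmx _)) revmxK -swap0; apply: HD.
    + by rewrite Dz2_revmx; apply: HD.
  split; [|right] => r hr; have [hn h3] := key r hr.
  + by rewrite -(bloch_norm_revmx (HPhi r hr)).
  + by rewrite -h3 (bloch_third_revmx (HPhi r hr)) opprK.
Qed.

Lemma Dz2_isometry_of_bloch (Phi : 'M[C]_2 -> 'M[C]_2) :
  (forall r, density r -> density (Phi r)) ->
  (forall r, density r -> bloch_norm (Phi r) = bloch_norm r) ->
  (forall r, density r -> bloch (Phi r) third = bloch r third) \/
  (forall r, density r -> bloch (Phi r) third = - bloch r third) ->
  forall r w, density r -> density w -> Dz2 (Phi r) (Phi w) = Dz2 r w.
Proof.
move=> HPhi Hn [H3|H3] r w hr hw.
  exact: Dz2_eq_of_bloch hr (HPhi r hr) hw (HPhi w hw) (Hn r hr) (H3 r hr) (Hn w hw) (H3 w hw).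
have dr := HPhi r hr; have dw := HPhi w hw.
rewrite -Dz2_revmx; apply: (Dz2_eq_of_bloch hr (density_revmx dr) hw (density_revmx dw)).
- by rewrite bloch_norm_revmx // Hn.
- by rewrite bloch_third_revmx // H3 // opprK.
- by rewrite bloch_norm_revmx // Hn.
- by rewrite bloch_third_revmx // H3 // opprK.
Qed.

End QubitTransport.

Theorem theorem3p1 (R : realType) (Phi : 'M[R[i]]_2 -> 'M[R[i]]_2)
  (HPhi : forall rho : 'M[R[i]]_2, density rho -> density (Phi rho)) :
  (forall rho omega : 'M[R[i]]_2, density rho -> density omega ->
     Dz (Phi rho) (Phi omega) = Dz rho omega)
  <->
  ((forall rho : 'M[R[i]]_2, density rho -> bloch_norm (Phi rho) = bloch_norm rho) /\
   ((forall rho : 'M[R[i]]_2, density rho ->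
       bloch (Phi rho) third = bloch rho third) \/
    (forall rho : 'M[R[i]]_2, density rho ->
       bloch (Phi rho) third = - bloch rho third))).
Proof.
split => [HDz | [Hn H3]].
- by apply: bloch_of_Dz2_isometry => // r w hr hw; apply/Dz_eq_Dz2/HDz.
- by move=> r w hr hw; apply/Dz_eq_Dz2; apply: Dz2_isometry_of_bloch.
Qed.
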